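(* Let $M$ be a geodesic metric space with convex metric, $Z\subseteq M$, $\nu>0$, $L\ge0$. If a geodesic triangle $\Delta$ in $M$ is $\nu$--thin relative to $Z$ and the $\nu$--fat part of some side of $\Delta$ has length at most $L$, then $\Delta$ is $2(L+\nu)$--thin.
   Context: For a geodesic triangle $\Delta(a,b,c)$ let $\pi\colon\Delta\to Y_{abc}$ be the map to the comparison tripod. $\Delta$ is $\nu$--thin if $\operatorname{diam}\pi^{-1}(p)\le\nu$ for all $p\in Y_{abc}$. $\Delta$ is $\nu$--thin relative to $U$ if it is not $\nu$--thin and for every $p\in Y_{abc}$ either $\operatorname{diam}\pi^{-1}(p)\le\nu$ or $\pi^{-1}(p)\subseteq N_\nu(U)$. The $\nu$--fat part of $\Delta$ is the union of the fibers of $\pi$ of diameter $\ge\nu$; the $\nu$--fat part of a side is its intersection with the $\nu$--fat part of $\Delta$. A metric is convex if the distance function between two constant-speed geodesics is convex. *)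

From Stdlib Require Import Reals Lra.
Open Scope R_scope.

Section Defs.
Context {M : Type}.
Variable d : M -> M -> R.

Definition is_metric : Prop :=
  (forall x y, d x y = 0 <-> x = y) /\
  (forall x y, d x y = d y x) /\
  (forall x y z, d x z <= d x y + d y z).

Definition geodesic (x y : M) (g : R -> M) : Prop :=
  g 0 = x /\ g (d x y) = y /\
  forall s t, 0 <= s <= d x y -> 0 <= t <= d x y ->
    d (g s) (g t) = Rabs (s - t).

Definition geodesic_space : Prop :=
  forall x y, exists g, geodesic x y g.

Definition const_speed_geodesic (c : R -> M) : Prop :=
  exists lam, 0 <= lam /\
    forall s t, 0 <= s <= 1 -> 0 <= t <= 1 -> d (c s) (c t) = lam * Rabs (s - t).

Definition convex_on01 (f : R -> R) : Prop :=
  forall s t th, 0 <= s <= 1 -> 0 <= t <= 1 -> 0 <= th <= 1 ->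
    f ((1 - th) * s + th * t) <= (1 - th) * f s + th * f t.

Definition convex_metric : Prop :=
  forall c1 c2, const_speed_geodesic c1 -> const_speed_geodesic c2 ->
    convex_on01 (fun t => d (c1 t) (c2 t)).

Record gtriangle := Tri {
  va : M; vb : M; vc : M;
  sab : R -> M;
  sbc : R -> M;
  sca : R -> M
}.

Definition geodesic_triangle (T : gtriangle) : Prop :=
  geodesic (va T) (vb T) (sab T) /\
  geodesic (vb T) (vc T) (sbc T) /\
  geodesic (vc T) (va T) (sca T).

Inductive side := SAB | SBC | SCA.
Inductive leg := LA | LB | LC.

(** Points of the comparison tripod Y_abc: the centre, or a point on a leg at
    positive distance s from the centre. *)
Inductive tripod := Center | OnLeg (l : leg) (s : R).

Definition mk_tp (l : leg) (s : R) : tripod :=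
  if Rle_dec s 0 then Center else OnLeg l s.

(** Gromov products = leg lengths of the tripod. *)
Definition leg_a (T : gtriangle) := (d (va T) (vb T) + d (va T) (vc T) - d (vb T) (vc T)) / 2.
Definition leg_b (T : gtriangle) := (d (vb T) (va T) + d (vb T) (vc T) - d (va T) (vc T)) / 2.
Definition leg_c (T : gtriangle) := (d (vc T) (va T) + d (vc T) (vb T) - d (va T) (vb T)) / 2.

Definition side_len (T : gtriangle) (sd : side) : R :=
  match sd with
  | SAB => d (va T) (vb T) | SBC => d (vb T) (vc T) | SCA => d (vc T) (va T)
  end.

Definition side_map (T : gtriangle) (sd : side) : R -> M :=
  match sd with SAB => sab T | SBC => sbc T | SCA => sca T end.

(** The map pi : Delta -> Y_abc; a point of Delta is a side together with the
    arclength parameter t in [0, side_len] measured from the initial vertex. *)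
Definition pi (T : gtriangle) (sd : side) (t : R) : tripod :=
  match sd with
  | SAB => if Rle_dec t (leg_a T) then mk_tp LA (leg_a T - t) else mk_tp LB (t - leg_a T)
  | SBC => if Rle_dec t (leg_b T) then mk_tp LB (leg_b T - t) else mk_tp LC (t - leg_b T)
  | SCA => if Rle_dec t (leg_c T) then mk_tp LC (leg_c T - t) else mk_tp LA (t - leg_c T)
  end.

Definition fiber (T : gtriangle) (p : tripod) (x : M) : Prop :=
  exists sd t, 0 <= t <= side_len T sd /\ pi T sd t = p /\ side_map T sd t = x.

(** diam S <= r  and  diam S >= r  (diam = sup of pairwise distances). *)
Definition diam_le (S : M -> Prop) (r : R) : Prop :=
  forall x y, S x -> S y -> d x y <= r.
Definition diam_ge (S : M -> Prop) (r : R) : Prop :=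
  forall eps, 0 < eps -> exists x y, S x /\ S y /\ r - eps < d x y.

Definition nbhd (U : M -> Prop) (r : R) (x : M) : Prop :=
  exists u, U u /\ d x u <= r.

Definition thin (nu : R) (T : gtriangle) : Prop :=
  forall p, diam_le (fiber T p) nu.

Definition thin_rel (nu : R) (T : gtriangle) (U : M -> Prop) : Prop :=
  ~ thin nu T /\
  forall p, diam_le (fiber T p) nu \/ (forall x, fiber T p x -> nbhd U nu x).

Definition fat_part (nu : R) (T : gtriangle) (x : M) : Prop :=
  exists p, diam_ge (fiber T p) nu /\ fiber T p x.

Definition fat_part_side (nu : R) (T : gtriangle) (sd : side) (x : M) : Prop :=
  (exists t, 0 <= t <= side_len T sd /\ side_map T sd t = x) /\ fat_part nu T x.

(** length of a subset of a geodesic segment, measured as its extent along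
    the segment (= its diameter, the segment being isometric to an interval) *)
Definition length_le (S : M -> Prop) (L : R) : Prop := diam_le S L.

End Defs.

From Stdlib Require Import Reals Lra PeanoNat.
Open Scope R_scope.

(** Let A, B, C be the leg lengths (Gromov products) of the comparison tripod of
    a geodesic triangle, and let the three internal points be the points of the
    sides [a,b], [b,c], [c,a] at distances A, B, C from a, b, c.  The fibre of
    pi over the point at distance s on leg a consists of the two points of
    [a,b] and [c,a] at distance A - s from a; call [gap T LA] their distance at
    s = 0 (and similarly for legs b, c).  Two unit-speed geodesics issued from
    a are at distance at most [gap T LA] by convexity of the metric, and at
    least [gap T LA - 2s] by the triangle inequality.

    Hence every fibre has diameter at most the largest gap ([thin_of_gaps]).
    Along the side [a,b], every point whose fibre partner is at distance >= nu
    is fat; the lower bound above shows that an interval of parameters of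
    length (gap_a - nu)/2 + (gap_b - nu)/2 around the internal point is fat, so
    a fat part of length <= L forces gap_a + gap_b <= 2(L + nu)
    ([fat_side_ab_gaps], via the real lemma [fat_interval_bound]).  The triangle
    inequality between internal points then bounds all three gaps.  The other
    two sides and legs are reduced to side [a,b] and leg a by cyclically
    relabelling the triangle ([rot]). *)

(** If [G] holds at 0 and wherever [nu <= u - 2x] on [0, A], then [G] holds at
    some [x] with [u <= 2x + nu], namely x = max 0 ((u - nu)/2). *)
Lemma fat_reach (nu A u : R) (G : R -> Prop) :
  0 <= nu -> 0 <= A -> u <= 2 * A ->
  (forall x, 0 <= x <= A -> nu <= u - 2 * x -> G x) -> G 0 ->
  exists x, 0 <= x /\ u <= 2 * x + nu /\ G x.
Proof.
  intros Hnu HA Hu HG H0.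
  destruct (Rle_dec u nu) as [Hle|Hgt].
  - exists 0. repeat split; [lra | lra | exact H0].
  - exists ((u - nu) / 2). repeat split; try lra. apply HG; lra.
Qed.

Lemma fat_interval_bound (nu L A B uA uB : R) (F : R -> Prop) :
  0 <= nu -> 0 <= L -> 0 <= A -> 0 <= B -> uA <= 2 * A -> uB <= 2 * B ->
  (forall x, 0 <= x <= A -> nu <= uA - 2 * x -> F (A - x)) ->
  (forall x, 0 <= x <= B -> nu <= uB - 2 * x -> F (A + x)) ->
  (forall t t', F t -> F t' -> t' - t <= L) ->
  uA + uB <= 2 * (L + nu).
Proof.
  intros Hnu HL HA HB HuA HuB HFa HFb HL'.
  assert (Hcentre : (uA < nu /\ uB < nu) \/ F A).
  { destruct (Rlt_le_dec uA nu); [destruct (Rlt_le_dec uB nu)|].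
    - left; lra.
    - right. rewrite <- (Rplus_0_r A). apply HFb; lra.
    - right. rewrite <- (Rminus_0_r A). apply HFa; lra. }
  destruct Hcentre as [Hsmall | HFA]; [lra|].
  destruct (fat_reach nu A uA (fun x => F (A - x)) Hnu HA HuA HFa)
    as [xa [Hxa [Hua Fa]]]; [now rewrite Rminus_0_r|].
  destruct (fat_reach nu B uB (fun x => F (A + x)) Hnu HB HuB HFb)
    as [xb [Hxb [Hub Fb]]]; [now rewrite Rplus_0_r|].
  pose proof (HL' _ _ Fa Fb). lra.
Qed.

Section ConvexTriangles.
Context {M : Type} (d : M -> M -> R).
Hypothesis Hmet : is_metric d.

Lemma dist_refl x : d x x = 0.
Proof. destruct Hmet as [H _]. now apply H. Qed.

Lemma dist_sym x y : d x y = d y x.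
Proof. destruct Hmet as [_ [H _]]. apply H. Qed.

Lemma dist_tri x y z : d x z <= d x y + d y z.
Proof. destruct Hmet as [_ [_ H]]. apply H. Qed.

Lemma dist_nonneg x y : 0 <= d x y.
Proof. pose proof (dist_tri x y x) as H. rewrite dist_refl, (dist_sym y x) in H. lra. Qed.

Definition unit_speed (p : R -> M) (K : R) : Prop :=
  forall s t, 0 <= s <= K -> 0 <= t <= K -> d (p s) (p t) = Rabs (s - t).

Lemma unit_speed_forward g D a K :
  unit_speed g D -> 0 <= a -> a + K <= D -> unit_speed (fun s => g (a + s)) K.
Proof. intros Hg Ha HK s t Hs Ht. rewrite Hg by lra. f_equal; ring. Qed.

Lemma unit_speed_backward g D a K :
  unit_speed g D -> K <= a <= D -> unit_speed (fun s => g (a - s)) K.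
Proof.
  intros Hg Ha s t Hs Ht. rewrite Hg by lra. rewrite <- Rabs_Ropp. f_equal; ring.
Qed.

Lemma unit_speed_rescale p K :
  0 <= K -> unit_speed p K -> const_speed_geodesic d (fun th => p (th * K)).
Proof.
  intros HK Hp. exists K. split; [lra|]. intros a b Ha Hb.
  rewrite Hp by nra. rewrite <- Rmult_minus_distr_r, Rabs_mult, (Rabs_pos_eq K) by lra.
  ring.
Qed.

Lemma dist_lower_bound p1 p2 K s :
  unit_speed p1 K -> unit_speed p2 K -> 0 <= s <= K ->
  d (p1 0) (p2 0) - 2 * s <= d (p1 s) (p2 s).
Proof.
  intros H1 H2 Hs.
  pose proof (dist_tri (p1 0) (p1 s) (p2 0)) as T1.
  pose proof (dist_tri (p1 s) (p2 s) (p2 0)) as T2.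
  rewrite H1 in T1 by lra. rewrite (dist_sym (p2 s)), H2 in T2 by lra.
  rewrite Rabs_minus_sym, Rminus_0_r, Rabs_pos_eq in T1, T2 by lra. lra.
Qed.

Hypothesis Hconv : convex_metric d.

Lemma converging_dist_le p1 p2 K s :
  unit_speed p1 K -> unit_speed p2 K -> p1 K = p2 K -> 0 <= s <= K ->
  d (p1 s) (p2 s) <= d (p1 0) (p2 0).
Proof.
  intros H1 H2 Hmeet Hs.
  destruct (Req_dec K 0) as [HK0|HK0].
  { replace s with 0 by lra. lra. }
  assert (Hth : 0 <= s / K <= 1).
  { split.
    - apply Rmult_le_pos; [lra | apply Rlt_le, Rinv_0_lt_compat; lra].
    - apply (Rmult_le_reg_r K); [lra|]. field_simplify; lra. }
  pose proof (Hconv _ _ (unit_speed_rescale p1 K ltac:(lra) H1)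
                (unit_speed_rescale p2 K ltac:(lra) H2) 0 1 (s / K)
                ltac:(lra) ltac:(lra) Hth) as Hc.
  cbv beta in Hc.
  replace ((1 - s / K) * 0 + s / K * 1) with (s / K) in Hc by ring.
  replace (s / K * K) with s in Hc by (field; lra).
  replace (0 * K) with 0 in Hc by ring. replace (1 * K) with K in Hc by ring.
  rewrite Hmeet, dist_refl in Hc. pose proof (dist_nonneg (p1 0) (p2 0)). nra.
Qed.


Lemma leg_lengths T :
  0 <= leg_a d T /\ 0 <= leg_b d T /\ 0 <= leg_c d T /\
  leg_a d T + leg_b d T = d (va T) (vb T) /\
  leg_b d T + leg_c d T = d (vb T) (vc T) /\
  leg_c d T + leg_a d T = d (vc T) (va T).
Proof.
  unfold leg_a, leg_b, leg_c.
  pose proof (dist_sym (va T) (vb T)). pose proof (dist_sym (vb T) (vc T)).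
  pose proof (dist_sym (vc T) (va T)).
  pose proof (dist_tri (vb T) (va T) (vc T)). pose proof (dist_tri (va T) (vb T) (vc T)).
  pose proof (dist_tri (va T) (vc T) (vb T)).
  repeat split; lra.
Qed.

Definition gap (T : @gtriangle M) (l : leg) : R :=
  match l with
  | LA => d (sab T (leg_a d T)) (sca T (leg_c d T))
  | LB => d (sbc T (leg_b d T)) (sab T (leg_a d T))
  | LC => d (sca T (leg_c d T)) (sbc T (leg_b d T))
  end.

Ltac case_pi H :=
  unfold pi, mk_tp in H;
  repeat match type of H with context [Rle_dec ?a ?b] => destruct (Rle_dec a b) end.

Lemma center_fiber_inv T x :
  fiber d T Center x ->
  x = sab T (leg_a d T) \/ x = sbc T (leg_b d T) \/ x = sca T (leg_c d T).
Proof.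
  intros [sd [t [Ht [Hp <-]]]]. destruct sd; case_pi Hp; try discriminate; cbn;
  first [ exfalso; lra | left; f_equal; lra
        | right; left; f_equal; lra | right; right; f_equal; lra ].
Qed.

Lemma leg_a_fiber_inv T s x :
  fiber d T (OnLeg LA s) x ->
  0 < s <= leg_a d T /\ (x = sab T (leg_a d T - s) \/ x = sca T (leg_c d T + s)).
Proof.
  destruct (leg_lengths T) as [GA [GB [GC [Eab [Ebc Eca]]]]].
  intros [sd [t [Ht [Hp <-]]]].
  destruct sd; cbn in Ht; case_pi Hp; try discriminate; injection Hp as <-; cbn;
  (split; [lra | first [left; f_equal; ring | right; f_equal; ring]]).
Qed.

(** Conversely both these points lie in the fibre over [mk_tp LA s]; this
    includes the centre fibre when s = 0. *)
Lemma leg_a_fiber_points T s :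
  0 <= s <= leg_a d T ->
  fiber d T (mk_tp LA s) (sab T (leg_a d T - s)) /\
  fiber d T (mk_tp LA s) (sca T (leg_c d T + s)).
Proof.
  destruct (leg_lengths T) as [GA [GB [GC [Eab [Ebc Eca]]]]]. intros Hs. split.
  - exists SAB, (leg_a d T - s). cbn. repeat split; try lra.
    unfold pi. destruct (Rle_dec _ _); [f_equal; ring | lra].
  - exists SCA, (leg_c d T + s). cbn. repeat split; try lra.
    unfold pi, mk_tp. repeat destruct (Rle_dec _ _); try lra; try reflexivity.
    f_equal; ring.
Qed.

Lemma leg_a_gap T :
  geodesic_triangle d T ->
  (forall s, 0 <= s <= leg_a d T ->
     gap T LA - 2 * s <= d (sab T (leg_a d T - s)) (sca T (leg_c d T + s)) <= gap T LA) /\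
  gap T LA <= 2 * leg_a d T.
Proof.
  intros [[Ha0 [_ Hab]] [_ [_ [Hc1 Hca]]]].
  destruct (leg_lengths T) as [GA [GB [GC [Eab [Ebc Eca]]]]].
  set (A := leg_a d T) in *. set (C := leg_c d T) in *.
  assert (P1 : unit_speed (fun s => sab T (A - s)) A)
    by (apply (unit_speed_backward _ _ _ _ Hab); lra).
  assert (P2 : unit_speed (fun s => sca T (C + s)) A)
    by (apply (unit_speed_forward _ _ _ _ Hca); lra).
  assert (Hmeet : sab T (A - A) = sca T (C + A))
    by (rewrite Rminus_diag, Ha0, Eca; exact (eq_sym Hc1)).
  assert (Hgap : gap T LA = d (sab T (A - 0)) (sca T (C + 0)))
    by (now rewrite Rminus_0_r, Rplus_0_r).
  rewrite Hgap. split.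
  - intros s Hs. split.
    + exact (dist_lower_bound _ _ _ s P1 P2 Hs).
    + exact (converging_dist_le _ _ _ s P1 P2 Hmeet Hs).
  - pose proof (dist_lower_bound _ _ _ A P1 P2 ltac:(lra)) as H.
    cbv beta in H. rewrite Hmeet, dist_refl in H. lra.
Qed.

Lemma fat_of_pair nu T p x y :
  fiber d T p x -> fiber d T p y -> nu <= d x y ->
  fat_part d nu T x /\ fat_part d nu T y.
Proof.
  intros Hx Hy Hxy. split; exists p; (split; [|assumption]);
  intros eps Heps; exists x, y; repeat split; auto; lra.
Qed.

Lemma leg_a_fat_part nu T :
  geodesic_triangle d T ->
  gap T LA <= 2 * leg_a d T /\
  forall s, 0 <= s <= leg_a d T -> nu <= gap T LA - 2 * s ->
    fat_part d nu T (sab T (leg_a d T - s)) /\ fat_part d nu T (sca T (leg_c d T + s)).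
Proof.
  intros HT. destruct (leg_a_gap T HT) as [Hdist Hgap]. split; [exact Hgap|].
  intros s Hs Hnu. destruct (leg_a_fiber_points T s Hs) as [F1 F2].
  apply (fat_of_pair _ _ _ _ _ F1 F2). pose proof (Hdist s Hs). lra.
Qed.

Lemma leg_a_fiber_diam T s :
  geodesic_triangle d T -> diam_le d (fiber d T (OnLeg LA s)) (gap T LA).
Proof.
  intros HT x y Hx Hy.
  destruct (leg_a_fiber_inv T s x Hx) as [Hs [-> | ->]];
  destruct (leg_a_fiber_inv T s y Hy) as [_ [-> | ->]];
  pose proof (proj1 (leg_a_gap T HT) s ltac:(lra)) as Hd;
  pose proof (dist_nonneg (sab T (leg_a d T - s)) (sca T (leg_c d T + s)));
  rewrite ?dist_refl, ?(dist_sym (sca _ _)); lra.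
Qed.

Definition rot (T : @gtriangle M) : @gtriangle M :=
  Tri (vb T) (vc T) (va T) (sbc T) (sca T) (sab T).

Definition rot_leg (l : leg) : leg := match l with LA => LB | LB => LC | LC => LA end.
Definition rot_side (sd : side) : side :=
  match sd with SAB => SBC | SBC => SCA | SCA => SAB end.
Definition rot_tp (p : tripod) : tripod :=
  match p with Center => Center | OnLeg l s => OnLeg (rot_leg l) s end.

Lemma rot_leg_inj l l' : rot_leg l = rot_leg l' -> l = l'.
Proof. destruct l, l'; cbn; congruence. Qed.

Lemma rot_tp_inj p q : rot_tp p = rot_tp q -> p = q.
Proof.
  destruct p, q; cbn; try discriminate; [reflexivity|].
  intros H; injection H as Hl ->. now rewrite (rot_leg_inj _ _ Hl).
Qed.

Lemma rot_tp_surj q : exists p, rot_tp p = q.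
Proof.
  destruct q as [|[] s]; [exists Center | exists (OnLeg LC s) | exists (OnLeg LA s)
                          | exists (OnLeg LB s)]; reflexivity.
Qed.

Lemma rot_side_surj sd' : exists sd, rot_side sd = sd'.
Proof. destruct sd'; [exists SCA | exists SAB | exists SBC]; reflexivity. Qed.

Lemma rot_tp_mk l s : rot_tp (mk_tp l s) = mk_tp (rot_leg l) s.
Proof. unfold mk_tp. now destruct (Rle_dec s 0). Qed.

Lemma leg_rot T :
  leg_a d (rot T) = leg_b d T /\ leg_b d (rot T) = leg_c d T /\
  leg_c d (rot T) = leg_a d T.
Proof.
  unfold leg_a, leg_b, leg_c; cbn.
  rewrite (dist_sym (vc T) (va T)), (dist_sym (vb T) (va T)). repeat split; lra.
Qed.

Lemma side_len_rot T sd : side_len d (rot T) sd = side_len d T (rot_side sd).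
Proof. now destruct sd. Qed.

Lemma side_map_rot T sd : side_map (rot T) sd = side_map T (rot_side sd).
Proof. now destruct sd. Qed.

Lemma pi_rot T sd t : pi d T (rot_side sd) t = rot_tp (pi d (rot T) sd t).
Proof.
  destruct (leg_rot T) as [Ea [Eb Ec]].
  destruct sd; unfold pi, rot_side; rewrite ?Ea, ?Eb, ?Ec;
  destruct (Rle_dec _ _); now rewrite rot_tp_mk.
Qed.

Lemma fiber_rot T p x : fiber d (rot T) p x <-> fiber d T (rot_tp p) x.
Proof.
  split.
  - intros [sd [t [Ht [Hp Hx]]]]. exists (rot_side sd), t.
    rewrite <- side_len_rot, <- side_map_rot, pi_rot, Hp. auto.
  - intros [sd' [t [Ht [Hp Hx]]]]. destruct (rot_side_surj sd') as [sd <-].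
    exists sd, t. rewrite pi_rot in Hp.
    rewrite side_len_rot, side_map_rot, (rot_tp_inj _ _ Hp). auto.
Qed.

Lemma diam_ge_ext (S S' : M -> Prop) r :
  (forall x, S x <-> S' x) -> diam_ge d S r -> diam_ge d S' r.
Proof.
  intros HS H eps Heps. destruct (H eps Heps) as [x [y [Hx [Hy Hr]]]].
  exists x, y. rewrite <- !HS. auto.
Qed.

Lemma fat_part_rot nu T x : fat_part d nu (rot T) x <-> fat_part d nu T x.
Proof.
  split.
  - intros [p [Hd Hx]]. exists (rot_tp p). split.
    + exact (diam_ge_ext _ _ _ (fiber_rot T p) Hd).
    + now apply fiber_rot.
  - intros [q [Hd Hx]]. destruct (rot_tp_surj q) as [p <-]. exists p. split.
    + refine (diam_ge_ext _ _ _ _ Hd). intros y. symmetry. apply fiber_rot.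
    + now apply fiber_rot.
Qed.

Lemma fat_part_side_rot nu T sd x :
  fat_part_side d nu (rot T) sd x <-> fat_part_side d nu T (rot_side sd) x.
Proof. unfold fat_part_side. rewrite fat_part_rot. now destruct sd. Qed.

Lemma gap_rot T l : gap (rot T) l = gap T (rot_leg l).
Proof.
  destruct (leg_rot T) as [Ea [Eb Ec]].
  destruct l; unfold gap, rot_leg; rewrite ?Ea, ?Eb, ?Ec; reflexivity.
Qed.

Lemma geodesic_triangle_rot T : geodesic_triangle d T -> geodesic_triangle d (rot T).
Proof. intros [H1 [H2 H3]]. exact (conj H2 (conj H3 H1)). Qed.

Lemma leg_b_fat_part nu T :
  geodesic_triangle d T ->
  gap T LB <= 2 * leg_b d T /\
  forall s, 0 <= s <= leg_b d T -> nu <= gap T LB - 2 * s ->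
    fat_part d nu T (sbc T (leg_b d T - s)) /\ fat_part d nu T (sab T (leg_a d T + s)).
Proof.
  intros HT.
  destruct (leg_a_fat_part nu (rot T) (geodesic_triangle_rot T HT)) as [Hgap Hfat].
  destruct (leg_rot T) as [Ea [_ Ec]].
  rewrite gap_rot, Ea in Hgap. rewrite gap_rot, Ea, Ec in Hfat.
  split; [exact Hgap|]. intros s Hs Hnu.
  rewrite <- !(fat_part_rot nu T). exact (Hfat s Hs Hnu).
Qed.

Lemma fiber_iter n T p x :
  fiber d (Nat.iter n rot T) p x <-> fiber d T (Nat.iter n rot_tp p) x.
Proof.
  revert p. induction n as [|n IH]; intros p; [reflexivity|].
  rewrite Nat.iter_succ, fiber_rot, IH, Nat.iter_swap. reflexivity.
Qed.

Lemma fat_part_side_iter nu n T sd x :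
  fat_part_side d nu (Nat.iter n rot T) sd x <->
  fat_part_side d nu T (Nat.iter n rot_side sd) x.
Proof.
  revert sd. induction n as [|n IH]; intros sd; [reflexivity|].
  rewrite Nat.iter_succ, fat_part_side_rot, IH, Nat.iter_swap. reflexivity.
Qed.

Lemma gap_iter n T l : gap (Nat.iter n rot T) l = gap T (Nat.iter n rot_leg l).
Proof.
  revert l. induction n as [|n IH]; intros l; [reflexivity|].
  rewrite Nat.iter_succ, gap_rot, IH, Nat.iter_swap. reflexivity.
Qed.

Lemma geodesic_triangle_iter n T :
  geodesic_triangle d T -> geodesic_triangle d (Nat.iter n rot T).
Proof. apply Nat.iter_invariant, geodesic_triangle_rot. Qed.

Lemma rot_tp_iter_onleg n l s :
  Nat.iter n rot_tp (OnLeg l s) = OnLeg (Nat.iter n rot_leg l) s.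
Proof. induction n as [|n IH]; [reflexivity|]. rewrite !Nat.iter_succ, IH. reflexivity. Qed.

Lemma rot_leg_cover l : exists n, Nat.iter n rot_leg LA = l.
Proof. destruct l; [exists 0%nat | exists 1%nat | exists 2%nat]; reflexivity. Qed.

Lemma rot_side_cover sd : exists n, Nat.iter n rot_side SAB = sd.
Proof. destruct sd; [exists 0%nat | exists 1%nat | exists 2%nat]; reflexivity. Qed.

Lemma fat_side_ab_gaps nu L T :
  0 <= nu -> 0 <= L -> geodesic_triangle d T ->
  length_le d (fat_part_side d nu T SAB) L ->
  gap T LA + gap T LB <= 2 * (L + nu).
Proof.
  intros Hnu HL HT Hlen.
  destruct (leg_lengths T) as [GA [GB [_ [Eab _]]]].
  destruct (leg_a_fat_part nu T HT) as [HgA HfatA].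
  destruct (leg_b_fat_part nu T HT) as [HgB HfatB].
  destruct HT as [[_ [_ Hab]] _].
  apply (fat_interval_bound nu L (leg_a d T) (leg_b d T) _ _
           (fun t => 0 <= t <= d (va T) (vb T) /\ fat_part d nu T (sab T t)));
    try assumption.
  - intros x Hx Hx'. split; [lra | apply (HfatA x Hx Hx')].
  - intros x Hx Hx'. split; [lra | apply (HfatB x Hx Hx')].
  - intros t t' [Ht Hft] [Ht' Hft'].
    assert (H : d (sab T t) (sab T t') <= L).
    { apply Hlen; split; auto; [exists t | exists t']; auto. }
    rewrite Hab, Rabs_minus_sym in H by lra. pose proof (Rle_abs (t' - t)). lra.
Qed.

Lemma gaps_from_consecutive T r l :
  gap T l + gap T (rot_leg l) <= r -> forall l', gap T l' <= r.
Proof.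
  unfold gap. intros H l'.
  pose proof (dist_nonneg (sab T (leg_a d T)) (sca T (leg_c d T))).
  pose proof (dist_nonneg (sbc T (leg_b d T)) (sab T (leg_a d T))).
  pose proof (dist_nonneg (sca T (leg_c d T)) (sbc T (leg_b d T))).
  pose proof (dist_tri (sab T (leg_a d T)) (sbc T (leg_b d T)) (sca T (leg_c d T))).
  pose proof (dist_tri (sbc T (leg_b d T)) (sca T (leg_c d T)) (sab T (leg_a d T))).
  pose proof (dist_tri (sca T (leg_c d T)) (sab T (leg_a d T)) (sbc T (leg_b d T))).
  rewrite !(dist_sym (sab T _) (sbc T _)), !(dist_sym (sbc T _) (sca T _)),
    !(dist_sym (sca T _) (sab T _)) in *.
  destruct l, l'; cbn in *; lra.
Qed.

Lemma thin_of_gaps T r :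
  geodesic_triangle d T -> (forall l, gap T l <= r) -> thin d r T.
Proof.
  intros HT Hg [|l s] x y Hx Hy.
  - pose proof (Hg LA) as HA. pose proof (Hg LB) as HB. pose proof (Hg LC) as HC.
    unfold gap in HA, HB, HC.
    pose proof (dist_nonneg (sab T (leg_a d T)) (sca T (leg_c d T))).
    destruct (center_fiber_inv T x Hx) as [-> | [-> | ->]];
    destruct (center_fiber_inv T y Hy) as [-> | [-> | ->]];
    rewrite ?dist_refl; first [lra | rewrite dist_sym; lra].
  - destruct (rot_leg_cover l) as [n <-].
    rewrite <- rot_tp_iter_onleg, <- fiber_iter in Hx, Hy.
    pose proof (leg_a_fiber_diam _ s (geodesic_triangle_iter n T HT) x y Hx Hy) as H.
    rewrite gap_iter in H. pose proof (Hg (Nat.iter n rot_leg LA)). lra.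
Qed.

End ConvexTriangles.

Theorem lemma2p3 (M : Type) (d : M -> M -> R)
  (Hmet : is_metric d) (Hgeo : geodesic_space d) (Hconv : convex_metric d)
  (Z : M -> Prop) (nu L : R) (Hnu : 0 < nu) (HL : 0 <= L)
  (T : gtriangle (M:=M)) (HT : geodesic_triangle d T) :
  thin_rel d nu T Z ->
  (exists sd : side, length_le d (fat_part_side d nu T sd) L) ->
  thin d (2 * (L + nu)) T.
Proof.
  intros _ [sd Hlen].
  destruct (rot_side_cover sd) as [n <-].
  apply (thin_of_gaps d Hmet Hconv T _ HT).
  apply (gaps_from_consecutive d Hmet T _ (Nat.iter n rot_leg LA)).
  rewrite <- Nat.iter_swap, <- !(gap_iter d Hmet).
  apply (fat_side_ab_gaps d Hmet Hconv nu L); [lra | exact HL |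
    exact (geodesic_triangle_iter d n T HT) |].
  intros x y Hx Hy. apply Hlen; apply (fat_part_side_iter d Hmet); assumption.
Qed.
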